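(* Let $\mathbb{F}_4=\{0,1,\omega,\omega+1\}$ be the field with four elements, where $\omega^2=\omega+1$. The irreducible $\lambda$-quiddities over $\mathbb{F}_4$ are exactly, up to cyclic permutation, the following tuples: - $(1,1,1)$; - $(0,0,0,0)$, $(0,\omega,0,\omega)$, $(0,\omega+1,0,\omega+1)$; - $(\omega,\omega,\omega,\omega,\omega)$, $(\omega+1,\omega+1,\omega+1,\omega+1,\omega+1)$; - $(\omega,\omega+1,\omega,\omega+1,\omega,\omega+1)$; - $(\omega,\omega,\omega+1,\omega+1,\omega,\omega,\omega+1,\omega+1)$; - $(\omega,\omega,\omega+1,\omega,\omega,\omega+1,\omega,\omega,\omega+1)$ and $(\omega+1,\omega+1,\omega,\omega+1,\omega+1,\omega,\omega+1,\omega+1,\omega)$.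
   Context: All rings are commutative with unit. For $a_1,\ldots,a_n\in A$, $M_n(a_1,\ldots,a_n)=\begin{pmatrix}a_n&-1\\1&0\end{pmatrix}\cdots\begin{pmatrix}a_1&-1\\1&0\end{pmatrix}$. An $n$-tuple $(a_1,\ldots,a_n)\in A^n$ is a $\lambda$-quiddity over $A$ if $M_n(a_1,\ldots,a_n)=\pm\mathrm{Id}$. For $(a_1,\ldots,a_n)\in A^n$, $(b_1,\ldots,b_m)\in A^m$, define $(a_1,\ldots,a_n)\oplus(b_1,\ldots,b_m)=(a_1+b_m,a_2,\ldots,a_{n-1},a_n+b_1,b_2,\ldots,b_{m-1})$. Write $(a_1,\ldots,a_n)\sim(b_1,\ldots,b_n)$ if $(b_1,\ldots,b_n)$ is obtained from $(a_1,\ldots,a_n)$ or from $(a_n,\ldots,a_1)$ by a cyclic permutation. A $\lambda$-quiddity $(c_1,\ldots,c_n)$ with $n\ge3$ is reducible if there exist a $\lambda$-quiddity $(b_1,\ldots,b_l)$ and a tuple $(a_1,\ldots,a_m)$ with $l,m\ge3$ and $(c_1,\ldots,c_n)\sim(a_1,\ldots,a_m)\oplus(b_1,\ldots,b_l)$; it is irreducible otherwise (by convention $(0,0)$ is reducible). *)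

From HB Require Import structures.
From mathcomp Require Import all_boot all_order all_algebra all_field.
Set Implicit Arguments. Unset Strict Implicit. Unset Printing Implicit Defensive.
Import GRing.Theory.
Local Open Scope ring_scope.

Section Quiddity.
Variable R : comNzRingType.

Definition qmat (a : R) : 'M[R]_2 :=
  \matrix_(i < 2, j < 2)
     if i == 0 :> nat then (if j == 0 :> nat then a else -1)
     else (if j == 0 :> nat then 1 else 0).

(* M_n(a_1,...,a_n) = qmat a_n * ... * qmat a_1. *)
Definition Mq (s : seq R) : 'M[R]_2 := foldl (fun M x => qmat x * M) 1 s.

Definition lambda_quiddity (s : seq R) : Prop := Mq s = 1 \/ Mq s = - 1.

(* (a_1..a_n) (+) (b_1..b_m) = (a_1+b_m, a_2..a_{n-1}, a_n+b_1, b_2..b_{m-1}) *)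
Definition qoplus (a b : seq R) : seq R :=
  [:: nth 0 a 0 + nth 0 b (size b).-1]
  ++ drop 1 (take (size a).-1 a)
  ++ [:: nth 0 a (size a).-1 + nth 0 b 0]
  ++ drop 1 (take (size b).-1 b).

Definition qsim (c d : seq R) : Prop :=
  exists k, d = rot k c \/ d = rot k (rev c).

Definition reducible (c : seq R) : Prop :=
  (c = [:: 0; 0]) \/
  (3 <= size c)%N /\
  exists a b : seq R, lambda_quiddity b /\ (3 <= size b)%N /\ (3 <= size a)%N /\
    qsim c (qoplus a b).

Definition irreducible_quiddity (c : seq R) : Prop :=
  lambda_quiddity c /\ (3 <= size c)%N /\ ~ reducible c.

End Quiddity.

From HB Require Import structures.
From mathcomp Require Import all_boot all_order all_algebra all_field.
From mathcomp Require Import zify ring.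
Set Implicit Arguments. Unset Strict Implicit. Unset Printing Implicit Defensive.
Import GRing.Theory.
Local Open Scope ring_scope.

(* The statement is transported along the isomorphism between F and a
   computable model of F_4 (pairs of booleans, in the basis 1, w), where everything
   reduces to finite checks.  The key observation is a criterion for reducibility:
   c is reducible iff some rotation or reflection d of c, cut at 3 <= m < n, has a tail
   (d_(m+1), ..., d_n) that becomes a lambda-quiddity once one entry is added at each end;
   then c ~ a (+) b with b that lambda-quiddity.  Every word of length 10 over F_4 contains
   the inner part of a rotation of a listed quiddity, so no irreducible lambda-quiddity
   has length >= 10.  For lengths 3 to 9 an exhaustive enumeration shows that every
   lambda-quiddity is listed or reducible in this way, and the criterion, being decidable,
   certifies that the listed ones are irreducible. *)

Section ReducibilityCriterion.
Variable R : comNzRingType.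
Implicit Types (c d u : seq R) (p q x y : R).

Lemma qoplus_cons_rcons x a y p b q :
  qoplus (x :: rcons a y) (p :: rcons b q) = x + q :: a ++ y + p :: b.
Proof.
rewrite /qoplus /= !size_rcons /= !nth_rcons !ltnn !eqxx.
by rewrite -!cats1 !take_size_cat ?drop0.
Qed.

Lemma qsim_size c d : qsim c d -> size d = size c.
Proof. by case=> k [] ->; rewrite size_rot ?size_rev. Qed.

Lemma reducibleP c : (3 <= size c)%N ->
  reducible c <-> exists d, qsim c d /\ exists2 m, (3 <= m < size c)%N &
    exists p q, lambda_quiddity (p :: rcons (drop m d) q).
Proof.
move=> c3; split.
  case=> [c00 | [_ [a [b [lqb [b3 [a3 sim_ab]]]]]]]; first by rewrite c00 in c3.
  case: a a3 sim_ab => [|x a] //; case/lastP: a => [|a y] // a3.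
  case: b lqb b3 => [|p b] //; case/lastP: b => [|b q] // lqb b3.
  rewrite qoplus_cons_rcons => sim_ab.
  have size_c := qsim_size sim_ab.
  move: a3 b3 size_c; rewrite /= !size_rcons size_cat /= => a3 b3 size_c.
  exists (x + q :: a ++ y + p :: b); split=> //.
  exists (size a).+2; first lia.
  by exists p, q; rewrite -cat_cons -cat_rcons drop_size_cat ?size_rcons.
case=> d [sim_cd [m m_bound [p [q lqb]]]].
have size_d := qsim_size sim_cd.
right; split=> //.
(* a := (d_1 - q, d_2, ..., d_(m-1), d_m - p) satisfies a (+) (p, d_(m+1), ..., d_n, q) = d. *)
have : (3 <= size (take m d))%N by rewrite size_takel; lia.
case: (take m d) (cat_take_drop m d) => [|r0 r] //; case/lastP: r => [|r rl] // d_eq r3.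
exists (r0 - q :: rcons r (rl - p)), (p :: rcons (drop m d) q).
split=> //; split; first by rewrite /= size_rcons size_drop; lia.
split; first by move: r3; rewrite /= !size_rcons.
by rewrite qoplus_cons_rcons !subrK -cat_rcons -cat_cons d_eq.
Qed.

Lemma rot_window_reducible c k rest p u q :
  lambda_quiddity (p :: rcons u q) -> u != [::] -> rot k c = rest ++ u ->
  (3 <= size rest)%N -> reducible c.
Proof.
move=> lqb u_nil rot_c rest3.
have size_c : size c = (size rest + size u)%N by rewrite -(size_rot k) rot_c size_cat.
have u_pos : (0 < size u)%N by case: u u_nil {lqb rot_c size_c}.
apply/reducibleP; first lia.
exists (rot k c); split; first by exists k; left.
by exists (size rest); [lia | exists p, q; rewrite rot_c drop_size_cat].
Qed.

End ReducibilityCriterion.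

Section CyclicWords.
Variable T : eqType.
Implicit Types s b : seq T.

Definition rotations s := [seq rot k s | k <- iota 0 (size s)].

Lemma rotationsP s d : (0 < size s)%N -> reflect (exists k, d = rot k s) (d \in rotations s).
Proof.
move=> s_pos; apply: (iffP mapP) => [[k _ ->]|[k ->]]; first by exists k.
case: (ltnP k (size s)) => [k_lt|k_ge]; first by exists k; rewrite ?mem_iota.
by exists 0%N; rewrite ?mem_iota // rot_oversize ?rot0.
Qed.

Definition inner b := take (size b - 2) (behead b).

Lemma inner_spec x0 b : (2 <= size b)%N -> b = head x0 b :: rcons (inner b) (last x0 b).
Proof.
case: b => [|x b] //; case/lastP: b => [|b y] //= _.
by rewrite /inner /= last_rcons size_rcons !subSS subn0 -cats1 take_size_cat // cats1.
Qed.

Lemma size_inner b : size (inner b) = (size b - 2)%N.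
Proof. by rewrite /inner size_takel // size_behead; lia. Qed.

End CyclicWords.

Section BoundedSearch.
Variables (T : eqType) (A : seq T) (P : pred (seq T)).
Hypothesis P_catr : forall p t, P p -> P (p ++ t).

(* The [if]s keep the search lazy under [vm_compute]. *)
Fixpoint covered (k : nat) (p : seq T) : bool :=
  if P p then true
  else if k is k'.+1 then all (fun x => covered k' (rcons p x)) A else false.

Lemma covered_sound k p : covered k p ->
  forall t, all (mem A) t -> size t = k -> P (p ++ t).
Proof.
elim: k p => [|k IH] p /=; case: ifP => [Pp _ t _ _|_ //]; try exact: P_catr.
move/allP=> cov [|x t] //= /andP [xA tA] [size_t].
by rewrite -cat_rcons; apply: IH (cov x xA) t tA size_t.
Qed.

End BoundedSearch.

(* A model of F_4: the pair (a, b) stands for a + b w. *)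
Definition F4 := (bool * bool)%type.
Definition zero4 : F4 := (false, false).
Definition one4 : F4 := (true, false).
Definition om4 : F4 := (false, true).
Definition om14 : F4 := (true, true).
Definition elems4 := [:: zero4; one4; om4; om14].

Lemma mem_elems4 x : x \in elems4.
Proof. by case: x => [[] []]. Qed.

Definition add4 (x y : F4) : F4 := (x.1 (+) y.1, x.2 (+) y.2).
Definition mul4 (x y : F4) : F4 :=
  ((x.1 && y.1) (+) (x.2 && y.2), (x.1 && y.2) (+) (x.2 && y.1) (+) (x.2 && y.2)).
Arguments add4 : simpl never.
Arguments mul4 : simpl never.

(* 2x2 matrices over the model, in row-major order. *)
Definition mx4 := (F4 * F4 * F4 * F4)%type.
Definition mulmx4 (A B : mx4) : mx4 :=
  let: (a, b, c, d) := A in let: (e, f, g, h) := B in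
  (add4 (mul4 a e) (mul4 b g), add4 (mul4 a f) (mul4 b h),
   add4 (mul4 c e) (mul4 d g), add4 (mul4 c f) (mul4 d h)).
Arguments mulmx4 : simpl never.
Definition idmx4 : mx4 := (one4, zero4, zero4, one4).
(* In characteristic 2, -1 = 1: hence the entries of [qmat4], and [lq4] only tests [Mq4 s = 1]. *)
Definition qmat4 (x : F4) : mx4 := (x, one4, one4, zero4).
Definition Mq4 (s : seq F4) : mx4 := foldl (fun M x => mulmx4 (qmat4 x) M) idmx4 s.
Definition lq4 (s : seq F4) : bool := Mq4 s == idmx4.

Definition irreducibles4 : seq (seq F4) :=
  [:: [:: one4; one4; one4];
      [:: zero4; zero4; zero4; zero4]; [:: zero4; om4; zero4; om4];
      [:: zero4; om14; zero4; om14];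
      [:: om4; om4; om4; om4; om4]; [:: om14; om14; om14; om14; om14];
      [:: om4; om14; om4; om14; om4; om14];
      [:: om4; om4; om14; om14; om4; om4; om14; om14];
      [:: om4; om4; om14; om4; om4; om14; om4; om4; om14];
      [:: om14; om14; om4; om14; om14; om4; om14; om14; om4]].

Definition cyclic_irreducible4 (s : seq F4) : bool :=
  has (fun t => s \in rotations t) irreducibles4.

Definition reducible4 (s : seq F4) : bool :=
  has (fun d => has (fun m => has (fun p => has (fun q =>
    lq4 (p :: rcons (drop m d) q)) elems4) elems4) (iota 3 (size s - 3)))
  (rotations s ++ rotations (rev s)).

Definition window_quiddities : seq (seq F4) := flatten [seq rotations t | t <- irreducibles4].

Definition has_window (s : seq F4) : bool :=
  has (fun d => has (fun b => (size (inner b) + 3 <= size s)%N && suffix (inner b) d)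
    window_quiddities) (rotations s).

Fixpoint seqs4 (n : nat) : seq (seq F4) :=
  if n is n'.+1 then [seq x :: s | x <- elems4, s <- seqs4 n'] else [:: [::]].

Lemma mem_seqs4 s : s \in seqs4 (size s).
Proof. by elim: s => //= x s IH; apply: allpairs_f (mem_elems4 x) IH. Qed.

Lemma window_quiddities_ok :
  all (fun b => lq4 b && (3 <= size b <= 9)%N) window_quiddities.
Proof. by vm_compute. Qed.

Lemma irreducibles4_ok : all (fun t => (3 <= size t)%N &&
  all (fun s => lq4 s && ~~ reducible4 s) (rotations t)) irreducibles4.
Proof. by vm_compute. Qed.

Lemma covered10 :
  covered elems4 (fun p => has (fun b => infix (inner b) p) window_quiddities) 10 [::].
Proof. by vm_compute. Qed.

Lemma short_quiddities_ok : all (fun n => all (fun s =>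
  if lq4 s then cyclic_irreducible4 s || has_window s else true) (seqs4 n)) (iota 3 7).
Proof. by vm_compute. Qed.

Lemma size_irreducibles4 t : t \in irreducibles4 -> (3 <= size t)%N.
Proof. by move=> t_irr; have /allP/(_ t t_irr)/andP [] := irreducibles4_ok. Qed.

Lemma cyclic_irreducible4P s :
  reflect (exists2 t, t \in irreducibles4 & exists k, s = rot k t) (cyclic_irreducible4 s).
Proof.
apply: (iffP hasP) => -[t t_irr rot_t]; exists t => //;
  by apply/(rotationsP _ (ltnW (ltnW (size_irreducibles4 t_irr)))).
Qed.

Lemma long_has_window s : (10 <= size s)%N -> has_window s.
Proof.
move=> s10.
have cat_window q t : has (fun b => infix (inner b) q) window_quiddities ->
    has (fun b => infix (inner b) (q ++ t)) window_quiddities.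
  by apply: sub_has => b; apply: infix_catr.
have all_elems : all (mem elems4) (take 10 s) by apply/allP => x _; apply: mem_elems4.
have /hasP [b bW] := covered_sound cat_window covered10 all_elems (size_takel s10).
move=> /(infix_catr (drop 10 s)); rewrite cat_take_drop => /infixP [x [y s_eq]].
have /allP/(_ b bW)/and3P [_ _ b9] := window_quiddities_ok.
apply/hasP; exists (rot (size (x ++ inner b)) s).
  by apply/rotationsP; [apply: leq_trans s10 | eexists].
apply/hasP; exists b => //; apply/andP; split.
  apply: leq_trans s10.
  by rewrite size_inner -[10%N]/(7 + 3)%N leq_add2r leq_subLR.
by rewrite s_eq catA rot_size_cat catA suffix_suffix.
Qed.

Lemma short_quiddity s : lq4 s -> (3 <= size s < 10)%N ->
  cyclic_irreducible4 s || has_window s.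
Proof.
move=> lqs /andP [s3 s10].
have /allP/(_ (size s)) := short_quiddities_ok.
rewrite mem_iota s3 => /(_ s10) /allP /(_ s (mem_seqs4 s)).
by rewrite lqs.
Qed.

Section Embedding.
Variables (F : finFieldType) (w : F).
Hypotheses (card_F : #|F| = 4%N) (w_sq : w ^+ 2 = w + 1).

Lemma pchar2_F : (2 \in [pchar F])%N.
Proof. by apply: (@card_finPcharP F 2 2). Qed.

Definition emb (x : F4) : F :=
  match x with
  | (false, false) => 0 | (true, false) => 1 | (false, true) => w | (true, true) => w + 1
  end.
Arguments emb : simpl never.

Lemma embE x : emb x = x.1%:R + x.2%:R * w.
Proof. by case: x => [[] []]; rewrite /= ?mul1r ?mul0r ?addr0 ?add0r // addrC. Qed.

Lemma natr_addb (a b : bool) : (a (+) b)%:R = a%:R + b%:R :> F.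
Proof. by case: a b => [] []; rewrite /= ?addr0 ?add0r ?(addrr_pchar2 pchar2_F). Qed.

Lemma natr_andb (a b : bool) : (a && b)%:R = a%:R * b%:R :> F.
Proof. by case: a b => [] []; rewrite /= ?mulr0 ?mul0r ?mulr1. Qed.

Lemma emb_add x y : emb (add4 x y) = emb x + emb y.
Proof. by rewrite !embE /= !natr_addb; ring. Qed.

Lemma emb_mul x y : emb (mul4 x y) = emb x * emb y.
Proof.
rewrite !embE /= !natr_addb !natr_andb.
transitivity (x.1%:R * y.1%:R + (x.1%:R * y.2%:R + x.2%:R * y.1%:R) * w
              + x.2%:R * y.2%:R * w ^+ 2 : F); last by ring.
by rewrite w_sq; ring.
Qed.

Lemma w_neq0 : w != 0.
Proof.
by apply/eqP => w0; move: w_sq; rewrite w0 expr2 mul0r add0r => /eqP; rewrite eq_sym oner_eq0.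
Qed.

Lemma w1_neq0 : w + 1 != 0.
Proof.
apply/eqP => w1; have w_1 : w = 1.
  by rewrite -[w]addr0 -(addrr_pchar2 pchar2_F 1) addrA w1 add0r.
by move: w_sq; rewrite w_1 expr1n (addrr_pchar2 pchar2_F) => /eqP; rewrite oner_eq0.
Qed.

Lemma emb_eq0 x : (emb x == 0) = (x == zero4).
Proof. by case: x => [[] []]; rewrite /= ?eqxx ?oner_eq0 ?(negPf w_neq0) ?(negPf w1_neq0). Qed.

Lemma emb_inj : injective emb.
Proof.
move=> x y exy; have : emb (add4 x y) == 0 by rewrite emb_add exy (addrr_pchar2 pchar2_F).
by rewrite emb_eq0; case: x y {exy} => [[] []] [[] []].
Qed.

Lemma emb_bij : bijective emb.
Proof. by apply: inj_card_bij emb_inj _; rewrite card_F card_prod card_bool. Qed.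

Lemma emb_onto (x : F) : exists y, x = emb y.
Proof. by have [inv _ invK] := emb_bij; exists (inv x); rewrite invK. Qed.

Lemma map_emb_onto (c : seq F) : exists s, c = map emb s.
Proof.
elim: c => [|x c [s ->]]; first by exists [::].
by have [y ->] := emb_onto x; exists (y :: s).
Qed.

Definition mx_of (A : mx4) : 'M[F]_2 :=
  let: (a, b, c, d) := A in
  \matrix_(i < 2, j < 2)
     if i == 0 :> nat then (if j == 0 :> nat then emb a else emb b)
     else (if j == 0 :> nat then emb c else emb d).

Lemma qmat_emb x : qmat (emb x) = mx_of (qmat4 x).
Proof. by apply/matrixP => i j; rewrite !mxE /= (oppr_pchar2 pchar2_F). Qed.

Lemma mx_of_mul A B : mx_of (mulmx4 A B) = mx_of A * mx_of B.
Proof.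
case: A => [[[a b] c] d]; case: B => [[[e f] g] h].
apply/matrixP => i j; rewrite /mulmx4 -mulmxE !mxE !big_ord_recl big_ord0 !mxE /=.
by case: i => [[|[|i]] hi]; case: j => [[|[|j]] hj] //=; rewrite !emb_add !emb_mul addr0.
Qed.

Lemma mx_of1 : mx_of idmx4 = 1.
Proof.
apply/matrixP => i j; rewrite !mxE /=.
by case: i => [[|[|i]] hi]; case: j => [[|[|j]] hj].
Qed.

Lemma mx_of_inj : injective mx_of.
Proof.
case=> [[[a b] c] d] [[[e f] g] h] /matrixP eq_mx.
have := eq_mx 0 0; have := eq_mx 0 1; have := eq_mx 1 0; have := eq_mx 1 1; rewrite !mxE /=.
by move=> /emb_inj -> /emb_inj -> /emb_inj -> /emb_inj ->.
Qed.

Lemma Mq_map_emb s : Mq (map emb s) = mx_of (Mq4 s).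
Proof.
rewrite /Mq /Mq4 -mx_of1; elim: s idmx4 => [|x s IH] M //=.
by rewrite -IH qmat_emb mx_of_mul.
Qed.

Lemma lambda_quiddity_map_emb s : lambda_quiddity (map emb s) <-> lq4 s.
Proof.
have N1 : - 1 = 1 :> 'M[F]_2.
  by apply/matrixP => i j; rewrite !mxE (oppr_pchar2 pchar2_F).
rewrite /lambda_quiddity /lq4 N1 Mq_map_emb -mx_of1.
by split=> [[] /mx_of_inj ->|/eqP ->]; last left.
Qed.

Lemma map_emb_qsim s d : (0 < size s)%N -> qsim (map emb s) d ->
  exists2 d', d' \in rotations s ++ rotations (rev s) & d = map emb d'.
Proof.
move=> s_pos [k [->|->]]; [exists (rot k s) | exists (rot k (rev s))];
  rewrite ?mem_cat ?map_rot ?map_rev //; apply/orP.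
- by left; apply/rotationsP => //; exists k.
- by right; apply/rotationsP; [rewrite size_rev | exists k].
Qed.

Lemma reducible_map_emb s : (3 <= size s)%N -> reducible (map emb s) -> reducible4 s.
Proof.
move=> s3 /reducibleP; rewrite size_map => /(_ s3) [d [sim_sd [m m_bound [p [q lqb]]]]].
have [d' d'_rot d_eq] := map_emb_qsim (ltnW (ltnW s3)) sim_sd.
have [[p' p_eq] [q' q_eq]] := (emb_onto p, emb_onto q).
have lq' : lq4 (p' :: rcons (drop m d') q').
  by apply/lambda_quiddity_map_emb; rewrite /= map_rcons map_drop -d_eq -p_eq -q_eq.
apply/hasP; exists d' => //; apply/hasP; exists m.
  by rewrite mem_iota; case/andP: m_bound => m3 ms; apply/andP; split; lia.
by apply/hasP; exists p'; rewrite ?mem_elems4 //; apply/hasP; exists q'; rewrite ?mem_elems4.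
Qed.

Lemma has_window_reducible s : has_window s -> reducible (map emb s).
Proof.
case/hasP=> _ /mapP [k _ ->] /hasP [b bW /andP [b_size /suffixP [rest rot_s]]].
have /allP/(_ b bW)/andP [lqb /andP [b3 _]] := window_quiddities_ok.
have b_eq := inner_spec zero4 (ltnW b3).
have size_s : size s = (size rest + size (inner b))%N by rewrite -(size_rot k) rot_s size_cat.
apply: (@rot_window_reducible _ _ k (map emb rest) (emb (head zero4 b))
                              (map emb (inner b)) (emb (last zero4 b))).
- rewrite -map_rcons.
  by apply/(lambda_quiddity_map_emb (head zero4 b :: rcons (inner b) (last zero4 b))); rewrite -b_eq.
- by rewrite -size_eq0 size_map size_inner -lt0n subn_gt0.
- by rewrite -map_rot rot_s map_cat.
by rewrite size_map -(leq_add2r (size (inner b))) -size_s addnC.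
Qed.

Lemma irreducible_map_emb s : irreducible_quiddity (map emb s) <-> cyclic_irreducible4 s.
Proof.
rewrite /irreducible_quiddity lambda_quiddity_map_emb size_map; split.
  case=> lqs [s3 irr_s]; case: (ltnP (size s) 10) => [s10|/long_has_window/has_window_reducible //].
  have /orP [//|/has_window_reducible //] := short_quiddity lqs (introT andP (conj s3 s10)).
case/hasP=> t t_irr s_rot.
have /allP/(_ t t_irr)/andP [t3 /allP/(_ s s_rot)/andP [lqs red_s]] := irreducibles4_ok.
have s3 : (3 <= size s)%N by case/mapP: s_rot => k _ ->; rewrite size_rot.
by do 2!split=> //; move/(reducible_map_emb s3); apply/negP.
Qed.

Lemma map_emb_irreducibles4 : map (map emb) irreducibles4 =
    [:: [:: 1; 1; 1];
        [:: 0; 0; 0; 0]; [:: 0; w; 0; w]; [:: 0; w + 1; 0; w + 1];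
        [:: w; w; w; w; w]; [:: w + 1; w + 1; w + 1; w + 1; w + 1];
        [:: w; w + 1; w; w + 1; w; w + 1];
        [:: w; w; w + 1; w + 1; w; w; w + 1; w + 1];
        [:: w; w; w + 1; w; w; w + 1; w; w; w + 1];
        [:: w + 1; w + 1; w; w + 1; w + 1; w; w + 1; w + 1; w]].
Proof. by []. Qed.

End Embedding.

Theorem theorem2p7 (F : finFieldType) (hF : #|F| = 4%N) (w : F)
  (hw : w ^+ 2 = w + 1) (c : seq F) :
  irreducible_quiddity c <->
  exists2 t, t \in
    [:: [:: 1; 1; 1];
        [:: 0; 0; 0; 0]; [:: 0; w; 0; w]; [:: 0; w + 1; 0; w + 1];
        [:: w; w; w; w; w]; [:: w + 1; w + 1; w + 1; w + 1; w + 1];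
        [:: w; w + 1; w; w + 1; w; w + 1];
        [:: w; w; w + 1; w + 1; w; w; w + 1; w + 1];
        [:: w; w; w + 1; w; w; w + 1; w; w; w + 1];
        [:: w + 1; w + 1; w; w + 1; w + 1; w; w + 1; w + 1; w]]
  & exists k, c = rot k t.
Proof.
have [s ->] := map_emb_onto hF hw c.
rewrite (irreducible_map_emb hF hw) -(map_emb_irreducibles4 w).
split=> [/cyclic_irreducible4P [t t_irr [k ->]]|[_ /mapP [t t_irr ->] [k]]].
  by exists (map (emb w) t); [apply: map_f | exists k; rewrite map_rot].
rewrite -map_rot => /(inj_map (emb_inj hF hw)) ->.
by apply/cyclic_irreducible4P; exists t => //; exists k.
Qed.
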